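(* Let $G$ be a graph with $m$ edges and $n$ vertices and let $t=\min\{m,\lceil \frac{n^2}{4}-\frac{n}{4}+\frac12\rceil\}$. Then $G$ is a $t$-interval-PCG.
   Context: All trees are unrooted with edges weighted by nonnegative reals; $d_T(u,v)$ is the weight of the path between leaves $u,v$ of $T$. A graph $G$ is a $k$-interval-PCG if there exist a tree $T$ whose leaf set is $V(G)$ and $k$ pairwise disjoint intervals $I_1,\ldots,I_k$ of nonnegative reals such that $\{u,v\}\in E(G)$ iff $d_T(u,v)\in I_i$ for some $i$. *)

From HB Require Import structures.
From mathcomp Require Import all_boot all_order all_algebra.
From mathcomp Require Import reals.
Set Implicit Arguments. Unset Strict Implicit. Unset Printing Implicit Defensive.
Import Order.TTheory GRing.Theory Num.Theory.
Local Open Scope ring_scope.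

Definition simple_graph (V : finType) (e : rel V) : Prop :=
  symmetric e /\ irreflexive e.

Definition num_edges (V : finType) (e : rel V) : nat :=
  #|[set [set p.1; p.2] | p in [set q : V * V | e q.1 q.2]]|.

Definition acyclic (W : finType) (adj : rel W) : Prop :=
  forall c : seq W, uniq c -> (3 <= size c)%N -> ~~ cycle adj c.

Definition is_tree (W : finType) (adj : rel W) : Prop :=
  [/\ symmetric adj, irreflexive adj,
      (forall x y : W, connect adj x y) & acyclic adj].

(* degree and leaves (a leaf is a vertex of degree at most 1; in a tree with
   at least two vertices this means degree exactly 1) *)
Definition degree (W : finType) (adj : rel W) (x : W) : nat :=
  #|[set y | adj x y]|.
Definition leaf (W : finType) (adj : rel W) (x : W) : bool :=
  (degree adj x <= 1)%N.

(* simple path u = x0, x1, ..., xl = v, given as u :: p *)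
Definition simple_path (W : finType) (adj : rel W) (u v : W) (p : seq W) : Prop :=
  [/\ path adj u p, last u p = v & uniq (u :: p)].

Definition path_weight (R : realType) (W : finType) (w : W -> W -> R)
  (u : W) (p : seq W) : R :=
  \sum_(ab <- zip (u :: p) p) w ab.1 ab.2.

Definition k_interval_PCG (R : realType) (V : finType) (e : rel V) (k : nat) : Prop :=
  exists (W : finType) (adj : rel W) (w : W -> W -> R) (f : V -> W)
         (I : 'I_k -> interval R),
    [/\ is_tree adj,
        (forall x y, adj x y -> 0 <= w x y /\ w x y = w y x),
        injective f /\ (forall x : W, leaf adj x <-> exists v, f v = x),
        (forall i (r : R), r \in I i -> 0 <= r) /\
        (forall i j, i != j -> forall r : R, r \in I i -> r \notin I j) &
        (forall u v : V, u != v ->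
           (e u v <-> exists p, simple_path adj (f u) (f v) p /\
                        exists i, path_weight w (f u) p \in I i))].

Definition bound_t (n : nat) : nat :=
  `| Num.ceil ((n%:R ^+ 2) / 4%:R - n%:R / 4%:R + 1 / 2%:R : rat) |%N.

From HB Require Import structures.
From mathcomp Require Import all_boot all_order all_algebra.
From mathcomp Require Import reals.
From mathcomp Require Import zify lra.
Set Implicit Arguments. Unset Strict Implicit. Unset Printing Implicit Defensive.
Import Order.TTheory GRing.Theory Num.Theory.
Local Open Scope ring_scope.

(* Hang the vertices as the leaves of a star whose edge to v has weight
   2^(rank v).  Then d_T(u, v) = 2^(rank u) + 2^(rank v), so distinct pairs
   have distinct distances.  If m <= t, one degenerate interval per edge
   distance works.  Otherwise the C(n,2) - m < t non-edge distances cut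
   [0, +oo[ into at most t intervals whose union contains exactly the edge
   distances; C(n,2) <= 2t is what makes one of the two cases apply. *)

Lemma count_nth_gt1 (T : Type) (a : pred T) x0 (s : seq T) i j :
  (i < j < size s)%N -> a (nth x0 s i) -> a (nth x0 s j) -> (1 < count a s)%N.
Proof.
move=> /andP [ij js] ai aj.
rewrite -[s in count _ s](cat_take_drop j) count_cat (drop_nth x0 js) /= aj.
suff : (0 < count a (take j s))%N by lia.
rewrite -has_count; apply/(has_nthP x0); exists i; last by rewrite nth_take.
by rewrite size_take js.
Qed.

Section IntervalPartition.
Variables (disp : Order.disp_t) (T : orderType disp).
Implicit Types (Is : seq (interval T)) (S : pred T).

(* Counting memberships encodes at once that the intervals are pairwise
   disjoint and that their union is S. *)
Definition itv_partition Is S := forall x, count (fun I => x \in I) Is = S x.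

Lemma points_itv_partition (A : seq T) :
  itv_partition [seq `[a, a] | a <- undup A] (mem A).
Proof.
move=> x; rewrite count_map -[mem A x]/(x \in A) -mem_undup.
rewrite -count_uniq_mem ?undup_uniq //.
by apply: eq_count => a; rewrite /= itv_boundlr !bnd_simp -eq_le.
Qed.

Lemma itv_partition_split Is S b : itv_partition Is S -> S b ->
  exists2 Is', size Is' = (size Is).+1 &
               itv_partition Is' [pred x | S x && (x != b)].
Proof.
move=> part Sb.
have /hasP [a aIs ba] : has (fun I => b \in I) Is by rewrite has_count part Sb.
exists [:: (a `&` `]-oo, b[)%O, (a `&` `]b, +oo[)%O & rem a Is].
  by rewrite /= (perm_size (perm_to_rem aIs)).
move=> x /=; rewrite count_rem aIs part !in_itvI.
have [xa|xa] := boolP (x \in a); rewrite /= ?in_itv /=; last first.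
  by rewrite subn0 (_ : x != b) ?andbT //; apply: contraNneq xa => ->.
have : has (fun I => x \in I) Is by apply/hasP; exists a.
by rewrite has_count part lt0b => ->; case: ltgtP.
Qed.

Lemma itv_partition_setD (J : interval T) (B : seq T) :
  exists2 Is, (size Is <= (size B).+1)%N &
              itv_partition Is [pred x | (x \in J) && (x \notin B)].
Proof.
elim: B => [|b B [Is sz part]]; first by exists [:: J] => // x; rewrite /= addn0 andbT.
have [Sb|Sb] := boolP ((b \in J) && (b \notin B)).
  have [Is' sz' part'] := itv_partition_split part Sb.
  exists Is'; first by rewrite sz'.
  by move=> x; rewrite part' /= in_cons negb_or -andbA [_ && (x != b)]andbC.
exists Is => [|x]; first exact: leqW.
rewrite part /= in_cons; case: eqP => [->|_] //=.
by rewrite (negbTE Sb) andbF.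
Qed.

Lemma mem_nth_itv_partition Is S i x :
  itv_partition Is S -> x \in nth \bot%O Is i -> S x.
Proof.
move=> part; have [iIs|iIs] := ltnP i (size Is); last by rewrite nth_default // in_itv.
move=> xi; have : has (fun I => x \in I) Is.
  by apply/hasP; exists (nth \bot%O Is i); rewrite ?mem_nth.
by rewrite has_count part lt0b.
Qed.

Lemma nth_itv_partition_disjoint Is S i j x : itv_partition Is S -> i != j ->
  x \in nth \bot%O Is i -> x \notin nth \bot%O Is j.
Proof.
move=> part neq_ij; wlog lt_ij : i j neq_ij / (i < j)%N.
  move=> sym; have [lt_ij|lt_ji|eq_ij] := ltngtP i j; first exact: sym.
    by move=> xi; apply: contraTN xi; apply: sym lt_ji; rewrite eq_sym.
  by rewrite eq_ij eqxx in neq_ij.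
move=> xi; apply/negP => xj.
have [jIs|jIs] := ltnP j (size Is); last by move: xj; rewrite nth_default // in_itv.
have := count_nth_gt1 (a := fun I => x \in I) (_ : i < j < size Is)%N xi xj.
by rewrite lt_ij jIs part => /(_ isT); case: (S x).
Qed.

Lemma itv_partition_cover Is S x : itv_partition Is S -> S x ->
  exists2 i, (i < size Is)%N & x \in nth \bot%O Is i.
Proof.
move=> part Sx; have /hasP [I IIs xI] : has (fun I => x \in I) Is.
  by rewrite has_count part Sx.
by exists (index I Is); rewrite ?index_mem ?nth_index.
Qed.

End IntervalPartition.

Section Star.
Variable V : finType.

Definition star_adj : rel (option V) := fun x y => (x == None) != (y == None).

Definition star_weight (R : zmodType) (c : V -> R) (x y : option V) : R :=
  match x, y with Some u, None | None, Some u => c u | _, _ => 0 end.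

Lemma star_tree : is_tree star_adj.
Proof.
have to_center z : connect star_adj z None by case: z => [z|]; [apply: connect1|].
have from_center z : connect star_adj None z by case: z => [z|]; [apply: connect1|].
split=> [x y|x|x y|].
- by rewrite /star_adj eq_sym.
- by rewrite /star_adj eqxx.
- exact: connect_trans (to_center x) (from_center y).
(* A cycle alternates between the centre and the leaves, so it would have to
   visit the centre twice. *)
move=> [|a [|b [|c q]]] //= U _; case: q U => [|d q].
  by case: a => [a|]; case: b => [b|]; case: c => [c|].
rewrite /cycle /= /star_adj.
case: a => [a|]; case: b => [b|]; case: c => [c|]; case: d => [d|] //=;
  rewrite ?andbF //= !inE /=; case/andP => // /negP; rewrite ?eqxx ?orbT.
Qed.

Lemma star_leaf x : (1 < #|V|)%N -> leaf star_adj x <-> exists v, Some v = x.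
Proof.
move=> /card_gt1P [u [v [_ _ uv]]]; rewrite /leaf /degree; split; last first.
  move=> [w <-]; apply: leq_trans (subset_leq_card (_ : _ \subset [set None])) _.
    by apply/subsetP => [[y|]]; rewrite !inE.
  by rewrite cards1.
case: x => [x _|]; first by exists x.
suff : (1 < #|[set y | star_adj None y]|)%N by rewrite ltnNge => /negP.
apply: leq_trans (subset_leq_card (_ : [set Some u; Some v] \subset _)).
  by rewrite cards2 (inj_eq (@Some_inj _)) uv.
by apply/subsetP => y; rewrite !inE => /orP [] /eqP ->.
Qed.

Lemma star_simple_path u v p : u != v ->
  simple_path star_adj (Some u) (Some v) p <-> p = [:: None; Some v].
Proof.
move=> uv; split; last first.
  by move=> ->; split => //=; rewrite !inE /= andbT; apply: contra uv => /eqP [->].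
case: p => [|x [|y [|z q]]]; rewrite /simple_path /star_adj /=.
- by case=> _ [] E; rewrite E eqxx in uv.
- by case: x => [x|] [].
- by case: x => [x|]; case: y => [y|]; case=> //= _ ->.
by case: x => [x|]; case: y => [y|]; case: z => [z|]; case => //= _ _; rewrite andbF.
Qed.

End Star.

Section StarPCG.
Variables (R : realType) (V : finType) (e : rel V).

Lemma star_interval_PCG (c : V -> R) (Is : seq (interval R)) (S : pred R) k :
  (1 < #|V|)%N -> (forall u, 0 <= c u) -> (forall x, S x -> 0 <= x) ->
  itv_partition Is S -> (size Is <= k)%N ->
  (forall u v, u != v -> e u v = S (c u + c v)) ->
  k_interval_PCG R e k.
Proof.
move=> V_gt1 c_ge0 S_ge0 part sz_k eS.
exists (option V), (@star_adj V), (star_weight c), Some,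
  (fun i : 'I_k => nth \bot%O Is i); split.
- exact: star_tree.
- by move=> [x|] [y|] //=.
- by split=> [|x]; [exact: Some_inj | exact: star_leaf].
- split=> [i r /(mem_nth_itv_partition part)|i j ij r]; first exact: S_ge0.
  exact: nth_itv_partition_disjoint part ij.
move=> u v uv.
have weight_uv : path_weight (star_weight c) (Some u) [:: None; Some v] = c u + c v.
  by rewrite /path_weight /= !big_cons big_nil addr0.
rewrite eS //; split=> [Suv|[p [/(star_simple_path _ uv) -> [i]]]].
  have [i i_lt uv_i] := itv_partition_cover part Suv.
  exists [:: None; Some v]; split; first exact/star_simple_path.
  by exists (Ordinal (leq_trans i_lt sz_k)); rewrite weight_uv.
by rewrite weight_uv => /(mem_nth_itv_partition part).
Qed.

Lemma interval_PCG_card_le1 k : (#|V| <= 1)%N -> k_interval_PCG R e k.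
Proof.
move=> V_le1; have all_eq (x y : V) : x = y.
  apply/eqP; apply: contraTT V_le1 => xy.
  by rewrite -ltnNge; apply/card_gt1P; exists x, y.
exists V, (fun _ _ => false), (fun _ _ => 0), id, (fun _ => \bot%O); split.
- by split=> // [x y|[|a [|b c]] //]; rewrite (all_eq x y) connect0.
- by [].
- split=> [|x]; first exact: inj_id.
  by split=> _; [exists x | exact: leq_trans (max_card _) V_le1].
- by split=> [i r|i j _ r]; rewrite in_itv.
by move=> u v; rewrite (all_eq u v) eqxx.
Qed.

End StarPCG.

Section PowerCode.
Variable V : finType.
Implicit Types (X Y : {set V}) (u v : V).

Definition pow2_code X : nat := \sum_(u in X) 2 ^ enum_rank u.

Lemma expn2D_inj a b c d : (a < b)%N -> (c < d)%N ->
  (2 ^ a + 2 ^ b = 2 ^ c + 2 ^ d)%N -> a = c /\ b = d.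
Proof.
have log_sum x y : (x < y)%N -> trunc_log 2 (2 ^ x + 2 ^ y) = y.
  move=> xy; apply: trunc_log_eq => //.
  by rewrite leq_addl expnS mul2n -addnn ltn_add2r ltn_exp2l.
move=> ab cd E; have bd : b = d by rewrite -(log_sum _ _ ab) E log_sum.
split=> //; apply: (expnI (isT : 1 < 2)%N); apply/eqP.
by rewrite -(eqn_add2r (2 ^ b)) E bd.
Qed.

Lemma pow2_code2 u v : u != v ->
  pow2_code [set u; v] = (2 ^ enum_rank u + 2 ^ enum_rank v)%N.
Proof. by move=> uv; rewrite /pow2_code big_setU1 ?inE //= big_set1. Qed.

Lemma cards2_rankP X : #|X| == 2 ->
  exists u v, (enum_rank u < enum_rank v)%N /\ X = [set u; v].
Proof.
move=> /cards2P [u [v [uv ->]]].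
have [lt|gt|/val_inj/enum_rank_inj eq] := ltngtP (enum_rank u) (enum_rank v).
- by exists u, v.
- by exists v, u; rewrite setUC.
by rewrite eq eqxx in uv.
Qed.

Lemma pow2_code_inj : {in [pred X : {set V} | #|X| == 2] &, injective pow2_code}.
Proof.
move=> X Y /cards2_rankP [u [v [uv ->]]] /cards2_rankP [x [y [xy ->]]].
have neq a b : (enum_rank a < enum_rank b)%N -> a != b.
  by move=> ab; apply: contraTneq ab => ->; rewrite ltnn.
rewrite !pow2_code2 ?neq // => /(expn2D_inj uv xy).
by case=> /val_inj/enum_rank_inj -> /val_inj/enum_rank_inj ->.
Qed.

Lemma mem_pow2_code_image (R : numDomainType) (F : {set {set V}}) X :
  {subset F <= [pred Y : {set V} | #|Y| == 2]} -> #|X| == 2 ->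
  ((pow2_code X)%:R \in [seq ((pow2_code Y)%:R : R) | Y in F]) = (X \in F).
Proof.
move=> F2 X2; apply/imageP/idP => [[Y YF /eqP]|XF]; last by exists X.
by rewrite eqr_nat => /eqP/pow2_code_inj -> //; apply: F2.
Qed.

End PowerCode.

Section EdgeSets.
Variables (V : finType) (e : rel V).
Hypotheses (e_sym : symmetric e) (e_irr : irreflexive e).

Definition edge_sets : {set {set V}} :=
  [set [set p.1; p.2] | p in [set q : V * V | e q.1 q.2]].

Definition nonedge_sets : {set {set V}} :=
  [set X : {set V} | (#|X| == 2) && (X \notin edge_sets)].

Lemma card_edge_sets X : X \in edge_sets -> #|X| == 2.
Proof.
move=> /imsetP [[a b]]; rewrite inE /= => eab ->.
apply/cards2P; exists a, b; split=> //.
by apply: contraTneq eab => ->; rewrite e_irr.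
Qed.

Lemma mem_edge_sets u v : u != v -> ([set u; v] \in edge_sets) = e u v.
Proof.
move=> uv; apply/imsetP/idP => [[[a b]]|euv]; last by exists (u, v); rewrite ?inE.
rewrite inE /= => eab uv_ab; have := set21 u v; have := set22 u v.
rewrite uv_ab => /set2P [] ? /set2P [] ?; subst;
  first [done | by rewrite eqxx in uv | by rewrite e_sym].
Qed.

Lemma mem_nonedge_sets u v : u != v -> ([set u; v] \in nonedge_sets) = ~~ e u v.
Proof. by move=> uv; rewrite inE cards2 uv mem_edge_sets. Qed.

Lemma mem_edge_codes (R : numDomainType) u v : u != v ->
  ((pow2_code [set u; v])%:R \in [seq ((pow2_code X)%:R : R) | X in edge_sets])
  = e u v.
Proof.
move=> uv; rewrite mem_pow2_code_image ?mem_edge_sets ?cards2 ?uv //.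
exact: card_edge_sets.
Qed.

Lemma mem_nonedge_codes (R : numDomainType) u v : u != v ->
  ((pow2_code [set u; v])%:R \in [seq ((pow2_code X)%:R : R) | X in nonedge_sets])
  = ~~ e u v.
Proof.
move=> uv; rewrite mem_pow2_code_image ?mem_nonedge_sets ?cards2 ?uv //.
by move=> X; rewrite inE => /andP [].
Qed.

Lemma num_edges_add_nonedges : (num_edges e + #|nonedge_sets| = 'C(#|V|, 2))%N.
Proof.
have edges2 : [set X : {set V} | #|X| == 2] :&: edge_sets = edge_sets.
  by apply/setIidPr/subsetP => X XE; rewrite inE card_edge_sets.
have nonedges2 : [set X : {set V} | #|X| == 2] :\: edge_sets = nonedge_sets.
  by apply/setP => X; rewrite !inE andbC.
by rewrite -card_draws -[RHS](cardsID edge_sets) edges2 nonedges2.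
Qed.

End EdgeSets.

Lemma bin2_le_double_bound_t n : ('C(n, 2) <= 2 * bound_t n)%N.
Proof.
case: n => [|n]; first by rewrite bin0n.
have bin2_le : ('C(n.+1, 2) * 2 <= n.+1 * n)%N.
  by rewrite bin2 muln2 -[X in (_ <= X)%N]odd_double_half leq_addl.
rewrite /bound_t; set q := (X in Num.ceil X).
have n_ge0 : (0 : rat) <= n%:R by [].
have q_gt : -1 < q by rewrite /q -natr1; nra.
rewrite -(ler_nat rat) natrM natr_absz ger0_norm ?ceil_ge0 //.
have := ceil_ge q; move: bin2_le; rewrite -(ler_nat rat) !natrM -natr1 /q.
nra.
Qed.

Theorem theorem3 (R : realType) (V : finType) (e : rel V) :
  simple_graph e ->
  k_interval_PCG R e (minn (num_edges e) (bound_t #|V|)).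
Proof.
move=> [e_sym e_irr]; have [V_le1|V_gt1] := leqP #|V| 1.
  exact: interval_PCG_card_le1.
pose c (u : V) : R := (2 ^ enum_rank u)%:R.
have c_pair (u v : V) : u != v -> c u + c v = (pow2_code [set u; v])%:R.
  by move=> uv; rewrite pow2_code2 // natrD.
have := num_edges_add_nonedges e_irr; have := bin2_le_double_bound_t #|V|.
have [m_le_t|t_lt_m] := leqP (num_edges e) (bound_t #|V|) => [_ _|bin2_le total].
  pose A := [seq ((pow2_code X)%:R : R) | X in edge_sets e].
  apply: (star_interval_PCG (c := c) V_gt1 _ _ (points_itv_partition A)) => //.
  - by move=> x /imageP [X _ ->].
  - by rewrite size_map (leq_trans (size_undup _)) // size_image.
  by move=> u v uv; rewrite -[mem A _]/(_ \in A) c_pair // mem_edge_codes.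
have nonedges_lt : (#|nonedge_sets e| < bound_t #|V|)%N by lia.
pose B := [seq ((pow2_code X)%:R : R) | X in nonedge_sets e].
have [Is size_Is part] := itv_partition_setD `[0, +oo[ B.
apply: (star_interval_PCG (c := c) V_gt1 _ _ part) => //.
- by move=> x /andP []; rewrite in_itv /= andbT.
- by apply: leq_trans size_Is _; rewrite size_image.
by move=> u v uv; rewrite c_pair //= in_itv /= ler0n mem_nonedge_codes ?negbK.
Qed.
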